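(* Let $a\ge 1$, and let $(c,d),(e,f)\in\mathcal{B}$ with $d$ and $f$ odd, $d\neq f$, and $\max\{c,c+d,e,e+f\}<a$. Then $U=\{(a,0),(c,d),(e,f)\}\subseteq\mathcal{B}$ is unavoidable.
   Context: The bicyclic inverse semigroup is $\mathcal{B}=\{(a,b)\in\mathbb{Z}\times\mathbb{Z}\mid a\ge 0,\ a+b\ge 0\}$ with multiplication $(a,b)(c,d)=(\max\{c+d,a\}-d,\ b+d)$. A subset $U\subseteq\mathcal{B}$ is called avoidable if $\mathcal{B}$ can be partitioned into two subsets $A$ and $B$ such that no element of $U$ can be written as a product $xy$ of two distinct elements $x\neq y$ both in $A$, or both in $B$. A set is unavoidable if it is not avoidable. *)

From Stdlib Require Import ZArith.
Open Scope Z_scope.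

(* Bicyclic inverse semigroup: carrier is the predicate inB on Z * Z. *)
Definition inB (p : Z * Z) : Prop := 0 <= fst p /\ 0 <= fst p + snd p.

Definition bmul (p q : Z * Z) : Z * Z :=
  (Z.max (fst q + snd q) (fst p) - snd q, snd p + snd q).

(* A 2-partition {A, B} of the bicyclic semigroup is encoded by a colouring
   col : Z*Z -> bool (A = col true, B = col false, restricted to inB). *)
Definition avoidable (U : Z * Z -> Prop) : Prop :=
  exists col : Z * Z -> bool,
    forall x y : Z * Z, inB x -> inB y -> x <> y -> col x = col y ->
      ~ U (bmul x y).

Definition unavoidable (U : Z * Z -> Prop) : Prop := ~ avoidable U.

(* Exhibit five elements x1, ..., x5 of the bicyclic semigroup, cyclically
   adjacent in the sense that each consecutive pair is distinct and multiplies (in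
   some order) to an element of U.  A cycle of odd length cannot be 2-coloured, so
   every partition puts some adjacent pair in the same part.  Writing d = v + k and
   f = v - k (possible since d and f have the same parity), the pentagon is
   (max 0 (-v), v), (c, k), (a + k, -k), (a, k), (e + max 0 v, -k). *)

From Stdlib Require Import ZArith Lia.
Open Scope Z_scope.

Definition linked (U : Z * Z -> Prop) (x y : Z * Z) : Prop :=
  inB x /\ inB y /\ x <> y /\ (U (bmul x y) \/ U (bmul y x)).

Lemma bool_pentagon (b1 b2 b3 b4 b5 : bool) :
  b1 = b2 \/ b2 = b3 \/ b3 = b4 \/ b4 = b5 \/ b5 = b1.
Proof. destruct b1, b2, b3, b4, b5; tauto. Qed.

Lemma unavoidable_of_pentagon (U : Z * Z -> Prop) (x1 x2 x3 x4 x5 : Z * Z) :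
  linked U x1 x2 -> linked U x2 x3 -> linked U x3 x4 ->
  linked U x4 x5 -> linked U x5 x1 -> unavoidable U.
Proof.
  intros L12 L23 L34 L45 L51 [col Hcol].
  assert (no_link : forall x y, linked U x y -> col x <> col y).
  { intros x y (Hx & Hy & Hxy & [HU | HU]) Hcol_eq.
    - exact (Hcol x y Hx Hy Hxy Hcol_eq HU).
    - exact (Hcol y x Hy Hx (not_eq_sym Hxy) (eq_sym Hcol_eq) HU). }
  destruct (bool_pentagon (col x1) (col x2) (col x3) (col x4) (col x5))
    as [H | [H | [H | [H | H]]]].
  - exact (no_link _ _ L12 H).
  - exact (no_link _ _ L23 H).
  - exact (no_link _ _ L34 H).
  - exact (no_link _ _ L45 H).
  - exact (no_link _ _ L51 H).
Qed.

Section Pentagon.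

Variables a c e k v : Z.
Hypotheses (Hk : 0 < k) (Hvk : v <> k) (Hvk' : v <> - k).
Hypotheses (Hcd : inB (c, v + k)) (Hef : inB (e, v - k)).
Hypothesis Ha : Z.max (Z.max c (c + (v + k))) (Z.max e (e + (v - k))) < a.

Let U (p : Z * Z) : Prop := p = (a, 0) \/ p = (c, v + k) \/ p = (e, v - k).

Let V := (Z.max 0 (- v), v).
Let P := (c, k).
Let M1 := (a + k, - k).
Let M2 := (a, k).
Let Q := (e + Z.max 0 v, - k).

Ltac solve_link :=
  unfold linked, U, V, P, M1, M2, Q, bmul, inB in *; cbn [fst snd] in *;
  repeat split; try lia;
  try (let E := fresh in intro E; injection E; lia);
  first [ left; left; f_equal; lia | left; right; left; f_equal; lia
        | left; right; right; f_equal; lia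
        | right; left; f_equal; lia | right; right; left; f_equal; lia
        | right; right; right; f_equal; lia ].

Lemma linked_V_P : linked U V P. Proof. solve_link. Qed.
Lemma linked_P_M1 : linked U P M1. Proof. solve_link. Qed.
Lemma linked_M1_M2 : linked U M1 M2. Proof. solve_link. Qed.
Lemma linked_M2_Q : linked U M2 Q. Proof. solve_link. Qed.

Lemma linked_Q_V : linked U Q V.
Proof. destruct (Z_le_gt_dec 0 v); solve_link. Qed.

Lemma unavoidable_pentagon : unavoidable U.
Proof.
  exact (unavoidable_of_pentagon U V P M1 M2 Q
           linked_V_P linked_P_M1 linked_M1_M2 linked_M2_Q linked_Q_V).
Qed.

End Pentagon.

Lemma unavoidable_same_parity_lt (a c d e f : Z) :
  inB (c, d) -> inB (e, f) -> Z.even (d + f) = true ->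
  d <> 0 -> f <> 0 -> f < d ->
  Z.max (Z.max c (c + d)) (Z.max e (e + f)) < a ->
  unavoidable (fun p => p = (a, 0) \/ p = (c, d) \/ p = (e, f)).
Proof.
  intros Hcd Hef Hsum Hd Hf Hfd Ha.
  apply Z.even_spec in Hsum as [v Hv].
  assert (Hk : exists k, d = v + k /\ f = v - k) by (exists (d - v); lia).
  destruct Hk as [k [-> ->]].
  apply unavoidable_pentagon; lia || assumption.
Qed.

Lemma unavoidable_same_parity (a c d e f : Z) :
  inB (c, d) -> inB (e, f) -> Z.even (d + f) = true ->
  d <> 0 -> f <> 0 -> d <> f ->
  Z.max (Z.max c (c + d)) (Z.max e (e + f)) < a ->
  unavoidable (fun p => p = (a, 0) \/ p = (c, d) \/ p = (e, f)).
Proof.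
  intros Hcd Hef Hsum Hd Hf Hdf Ha.
  destruct (Z_lt_ge_dec f d) as [Hfd | Hdf'].
  { now apply unavoidable_same_parity_lt. }
  intros [col Hcol]; apply (unavoidable_same_parity_lt a e f c d);
    try (assumption || lia).
  - now rewrite Z.add_comm.
  - exists col; intros x y Hx Hy Hxy Hc HU.
    apply (Hcol x y Hx Hy Hxy Hc); tauto.
Qed.

Theorem lemma5p3 (a c d e f : Z) :
  1 <= a ->
  inB (c, d) -> inB (e, f) ->
  Z.odd d = true -> Z.odd f = true -> d <> f ->
  Z.max (Z.max c (c + d)) (Z.max e (e + f)) < a ->
  unavoidable (fun p => p = (a, 0) \/ p = (c, d) \/ p = (e, f)).
Proof.
  (* [1 <= a] is redundant: [a > c >= 0]. *)
  intros _ Hcd Hef Hd Hf Hdf Ha.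
  apply unavoidable_same_parity; try assumption.
  - now rewrite Z.even_add, <- !Z.negb_odd, Hd, Hf.
  - now intros ->.
  - now intros ->.
Qed.
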